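(* Let $G$ be a disk graph with parameter $r$ on a finite point set in the plane. For every two crossing edges of $G$, the four endpoints are pairwise at Euclidean distance at most $2r$; moreover, one of the four endpoints is within distance $r$ of each of the other three.
   Context: The disk graph on a point set $P$ with parameter $r$ is the geometric graph with vertex set $P$ having a straight-line edge between $p,q\in P$ iff $|pq|\le r$. Two line segments cross if they have a common point that is interior to both. *)

From Stdlib Require Import Reals List.
Import ListNotations.
Open Scope R_scope.

Definition point := (R * R)%type.

Definition edist (p q : point) : R :=
  sqrt ((fst p - fst q)^2 + (snd p - snd q)^2).

Definition disk_edge (P : list point) (r : R) (p q : point) : Prop :=
  In p P /\ In q P /\ p <> q /\ edist p q <= r.

Definition seg_interior (p q z : point) : Prop :=
  exists t : R, 0 < t < 1 /\
    z = ((1 - t) * fst p + t * fst q, (1 - t) * snd p + t * snd q).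

Definition segs_cross (p q s t : point) : Prop :=
  exists z : point, seg_interior p q z /\ seg_interior s t z.

(** The crossing point z lies on both edges, so |pz| + |zq| = |pq| <= r and
    |sz| + |zt| = |st| <= r: every endpoint is within r of z, and any two
    endpoints are within 2r of each other. Routing through z also gives
    |ps| + |qt| <= 2r and |pt| + |qs| <= 2r, so one side of each pair of
    opposite sides has length at most r; any such choice of two short sides,
    together with the edges pq and st, leaves one endpoint adjacent to the
    other three. *)
From Stdlib Require Import Reals Rgeom List Lra.
Import ListNotations.
Open Scope R_scope.

Lemma edist_dist_euc p q : edist p q = dist_euc (fst p) (snd p) (fst q) (snd q).
Proof. unfold edist, dist_euc, Rsqr; f_equal; ring. Qed.

Lemma edist_nonneg p q : 0 <= edist p q.
Proof. apply sqrt_pos. Qed.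

Lemma edist_sym p q : edist p q = edist q p.
Proof. rewrite !edist_dist_euc; apply distance_symm. Qed.

Lemma edist_refl p : edist p p = 0.
Proof. rewrite edist_dist_euc; apply distance_refl. Qed.

Lemma edist_triangle p q w : edist p q <= edist p w + edist w q.
Proof. rewrite !edist_dist_euc; apply triangle. Qed.

Lemma sqrt_sum_sq_scale a x y :
  0 <= a -> sqrt ((a * x) ^ 2 + (a * y) ^ 2) = a * sqrt (x ^ 2 + y ^ 2).
Proof.
  intros a_ge0.
  replace ((a * x) ^ 2 + (a * y) ^ 2) with (a ^ 2 * (x ^ 2 + y ^ 2)) by ring.
  rewrite sqrt_mult, sqrt_pow2 by (auto using pow2_ge_0, Rplus_le_le_0_compat).
  reflexivity.
Qed.

Lemma seg_interior_sym {p q z} : seg_interior p q z -> seg_interior q p z.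
Proof.
  intros [a [a_bnd ->]]; exists (1 - a); split; [lra | f_equal; ring].
Qed.

(* The point (1 - a) p + a q cuts pq into pieces of lengths a |pq| and (1 - a) |pq|. *)
Lemma seg_interior_edist_split p q z :
  seg_interior p q z -> edist p z + edist z q = edist p q.
Proof.
  intros [a [a_bnd ->]]; unfold edist; cbn [fst snd].
  replace (fst p - ((1 - a) * fst p + a * fst q)) with (a * (fst p - fst q)) by ring.
  replace (snd p - ((1 - a) * snd p + a * snd q)) with (a * (snd p - snd q)) by ring.
  replace ((1 - a) * fst p + a * fst q - fst q) with ((1 - a) * (fst p - fst q)) by ring.
  replace ((1 - a) * snd p + a * snd q - snd q) with ((1 - a) * (snd p - snd q)) by ring.
  rewrite !sqrt_sum_sq_scale by lra; ring.
Qed.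

Lemma seg_interior_edist_le {p q z} : seg_interior p q z -> edist p z <= edist p q.
Proof.
  intros z_pq; apply seg_interior_edist_split in z_pq.
  pose proof (edist_nonneg z q); lra.
Qed.

Lemma crossing_opposite_sides_le {p q s t z} :
  seg_interior p q z -> seg_interior s t z ->
  edist p s + edist q t <= edist p q + edist s t.
Proof.
  intros z_pq z_st.
  apply seg_interior_edist_split in z_pq, z_st.
  pose proof (edist_triangle p s z); pose proof (edist_triangle q t z).
  rewrite (edist_sym z s), (edist_sym q z) in *; lra.
Qed.

Lemma Forall_four (A : Type) (P : A -> Prop) a b c d :
  P a -> P b -> P c -> P d -> forall y, In y [a; b; c; d] -> P y.
Proof. intros Pa Pb Pc Pd y [<-|[<-|[<-|[<-|[]]]]]; assumption. Qed.

Lemma four_points_center (r : R) (p q s t : point) :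
  edist p q <= r -> edist s t <= r ->
  edist p s <= r \/ edist q t <= r -> edist p t <= r \/ edist q s <= r ->
  exists x, In x [p; q; s; t] /\ forall y, In y [p; q; s; t] -> edist x y <= r.
Proof.
  intros pq_le st_le ps_qt pt_qs.
  assert (self_le : forall x, edist x x <= r).
  { intros x; rewrite edist_refl; pose proof (edist_nonneg p q); lra. }
  assert (sym_le : forall x y, edist x y <= r -> edist y x <= r).
  { intros x y; rewrite edist_sym; trivial. }
  destruct ps_qt as [ps_le | qt_le], pt_qs as [pt_le | qs_le].
  - exists p; split; [simpl; tauto | apply Forall_four; auto].
  - exists s; split; [simpl; tauto | apply Forall_four; auto].
  - exists t; split; [simpl; tauto | apply Forall_four; auto].
  - exists q; split; [simpl; tauto | apply Forall_four; auto].
Qed.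

Theorem corollary2 (P : list point) (r : R) (p q s t : point) :
  disk_edge P r p q -> disk_edge P r s t -> segs_cross p q s t ->
  (forall x y, In x [p; q; s; t] -> In y [p; q; s; t] -> edist x y <= 2 * r) /\
  (exists x, In x [p; q; s; t] /\
     forall y, In y [p; q; s; t] -> y <> x -> edist x y <= r).
Proof.
  intros (_ & _ & _ & pq_le) (_ & _ & _ & st_le) (z & z_pq & z_st).
  pose proof (seg_interior_sym z_pq) as z_qp.
  pose proof (seg_interior_sym z_st) as z_ts.
  assert (near_z : forall w, In w [p; q; s; t] -> edist w z <= r).
  { pose proof (seg_interior_edist_le z_pq); pose proof (seg_interior_edist_le z_qp).
    pose proof (seg_interior_edist_le z_st); pose proof (seg_interior_edist_le z_ts).
    rewrite (edist_sym q p), (edist_sym t s) in *.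
    apply Forall_four; lra. }
  split.
  { intros x y x_in y_in.
    pose proof (near_z x x_in); pose proof (near_z y y_in).
    pose proof (edist_triangle x y z); rewrite (edist_sym z y) in *; lra. }
  pose proof (crossing_opposite_sides_le z_pq z_st).
  pose proof (crossing_opposite_sides_le z_pq z_ts).
  pose proof (edist_sym t s).
  destruct (four_points_center r p q s t pq_le st_le) as [x [x_in x_center]]; try lra.
  exists x; split; [exact x_in | intros y y_in _; exact (x_center y y_in)].
Qed.
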